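(* Let $t=\lceil\frac{n-\kappa}{2}\rceil$ and $\mathrm{Small}(x)=\mathrm{Small}_t(x)$. Suppose $\mathrm{Small}(u)$ and $\mathrm{Small}(v)$ both exist and $u\in\mathrm{Side}_{\mathrm{Small}(v)}(v)$, and suppose $W$ is a $\kappa$-cut with $u\notin W$ and $\kappa\le|\mathrm{Side}_{\mathrm{Small}(v)}(v)|<|\mathrm{Side}_W(u)|\le t$. Then $v\in W\cup\mathrm{Side}_W(u)$.
   Context: $G=(V,E)$ is a finite, simple, connected, undirected, non-complete graph with $n=|V|$; $\kappa$ is its vertex connectivity, assumed $\kappa<n/4$. A cut is a set $U\subset V$ whose removal disconnects $G$; a $\kappa$-cut is a cut of size $\kappa$; a side of $U$ is a connected component of the subgraph induced on $V\setminus U$; $\mathrm{Side}_U(x)$ is the side containing $x\notin U$. For a vertex $x$ and $t\le\lceil\frac{n-\kappa}{2}\rceil$, $\mathrm{Small}_t(x)$ denotes, when it exists, the unique $\kappa$-cut $Y$ with $x\notin Y$, $|\mathrm{Side}_Y(x)|\le t$, and $\mathrm{Side}_Y(x)\subseteq\mathrm{Side}_U(x)$ for every $\kappa$-cut $U$ with $x\notin U$ and $|\mathrm{Side}_U(x)|\le t$ (it exists iff some $\kappa$-cut $U$ with $x\notin U$ has $|\mathrm{Side}_U(x)|\le t$). *)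

From mathcomp Require Import all_boot.
Set Implicit Arguments. Unset Strict Implicit. Unset Printing Implicit Defensive.

Section Graph.
Variables (T : finType) (e : rel T).

Definition simple_graph : Prop := symmetric e /\ irreflexive e.
Definition connected_graph : Prop := forall x y : T, connect e x y.
Definition non_complete : Prop := exists x y : T, x != y /\ ~~ e x y.

Definition del_rel (U : {set T}) : rel T :=
  [rel x y | [&& e x y, x \notin U & y \notin U]].

Definition Side (U : {set T}) (x : T) : {set T} :=
  [set y | (y \notin U) && connect (del_rel U) x y].

Definition is_cut (U : {set T}) : Prop :=
  exists x y : T, [/\ x \notin U, y \notin U & ~~ connect (del_rel U) x y].

Definition is_connectivity (k : nat) : Prop :=
  (exists U, is_cut U /\ #|U| = k) /\ (forall U, is_cut U -> k <= #|U|).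

Definition kcut (k : nat) (U : {set T}) : Prop := is_cut U /\ #|U| = k.

Definition is_Small (k t : nat) (x : T) (Y : {set T}) : Prop :=
  [/\ kcut k Y, x \notin Y, #|Side Y x| <= t &
      forall U, kcut k U -> x \notin U -> #|Side U x| <= t ->
        Side Y x \subset Side U x].

End Graph.

From mathcomp Require Import all_boot.
From mathcomp Require Import zify.
Set Implicit Arguments. Unset Strict Implicit. Unset Printing Implicit Defensive.

(* Let X = Small(v), P = Side_X(v), Q = Side_W(u), and suppose v lies neither
   in W nor in Q.  The "corner" A = P \ (W u Q) then contains v, and its
   boundary N(A) (the outside neighbours of A) lies in (X \ Q) u (W n P);
   symmetrically the opposite corner B = Q \ (X u P) has boundary inside
   (W \ P) u (X n Q).  These two bounds add up to |X| + |W| = 2 kappa.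
   If B is nonempty, N(B) is a cut, so |N(B)| >= kappa and |N(A)| <= kappa;
   if B is empty, Q is covered by P u X and counting with |P| < |Q| gives
   |N(A)| < kappa, which is impossible since N(A) is a cut.  Hence N(A) is a
   kappa-cut, and Side_{N(A)}(v) is contained in A, so it is small.  By the
   minimality of Small(v), P is contained in Side_{N(A)}(v), hence in A; but
   u lies in P and in Q, contradicting the definition of A. *)

Section Sides.
Variables (T : finType) (e : rel T).
Hypothesis sym_e : symmetric e.

Definition boundary (A : {set T}) : {set T} :=
  [set y | (y \notin A) && [exists x in A, e x y]].

Lemma boundaryP (A : {set T}) (y : T) :
  reflect (y \notin A /\ exists2 x, x \in A & e x y) (y \in boundary A).
Proof.
rewrite inE; apply: (iffP andP) => [[yA /existsP[x /andP[xA exy]]] | [yA [x xA exy]]].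
  by split => //; exists x.
by split => //; apply/existsP; exists x; rewrite xA.
Qed.

Lemma del_connect_sym (U : {set T}) : connect_sym (del_rel e U).
Proof.
apply: sym_connect_sym => x y; rewrite /del_rel /= sym_e.
by case: (e y x); case: (x \in U); case: (y \in U).
Qed.

Lemma Side_notin (U : {set T}) (x y : T) : y \in Side e U x -> y \notin U.
Proof. by rewrite inE => /andP[]. Qed.

Lemma Side_self (U : {set T}) (x : T) : x \notin U -> x \in Side e U x.
Proof. by move=> xU; rewrite inE xU connect0. Qed.

Lemma Side_edge (U : {set T}) (x y z : T) :
  e y z -> y \notin U -> z \notin U -> (y \in Side e U x) = (z \in Side e U x).
Proof.
move=> eyz yU zU; rewrite !inE yU zU /=.
have dyz : del_rel e U y z by rewrite /del_rel /= eyz yU zU.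
apply/idP/idP => cx; first exact: connect_trans cx (connect1 dyz).
by apply: connect_trans cx _; rewrite del_connect_sym connect1.
Qed.

Lemma Side_boundary_sub (A : {set T}) (x : T) :
  x \in A -> Side e (boundary A) x \subset A.
Proof.
move=> xA; apply/subsetP => y; rewrite inE => /andP[_ cxy].
have closedA : closed (del_rel e (boundary A)) (mem A).
  move=> a b /and3P[eab aN bN]; apply/idP/idP => inA.
    by apply: contraR bN => bA; apply/boundaryP; split=> //; exists a.
  by apply: contraR aN => aA; apply/boundaryP; split=> //; exists b; rewrite // sym_e.
by rewrite -(closed_connect closedA cxy).
Qed.

Lemma boundary_cut (A : {set T}) (x z : T) :
  x \in A -> z \notin A -> z \notin boundary A -> is_cut e (boundary A).
Proof.
move=> xA zA zN; exists x, z; split => //; first by rewrite inE xA.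
apply/negP => cxz.
have : z \in Side e (boundary A) x by rewrite inE zN cxz.
by move/(subsetP (Side_boundary_sub xA)); apply/negP.
Qed.

Lemma cut_outside_Side (U : {set T}) (x : T) :
  is_cut e U -> x \notin U -> exists2 z, z \notin U & z \notin Side e U x.
Proof.
move=> [a [b [aU bU nab]]] xU.
case Ha: (a \in Side e U x); last by exists a; rewrite ?Ha.
case Hb: (b \in Side e U x); last by exists b; rewrite ?Hb.
move: Ha Hb; rewrite !inE => /andP[_ ca] /andP[_ cb].
by move: nab; rewrite (connect_trans _ cb) // del_connect_sym.
Qed.

Section Corner.
Variables (X W : {set T}) (x w : T).
Let P := Side e X x.
Let Q := Side e W w.

Lemma corner_boundary :
  boundary (P :\: (W :|: Q)) \subset (X :\: Q) :|: (W :&: P).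
Proof.
apply/subsetP => y /boundaryP[yA [c cA ecy]].
move: cA yA; rewrite !in_setD !in_setU !negb_or => /andP[/andP[cW cQ] cP].
have cX : c \notin X := Side_notin cP.
have yQ : y \notin Q.
  case yW: (y \in W); first by apply: contraTN yW => /Side_notin.
  by rewrite /Q -(Side_edge _ ecy cW) ?yW.
rewrite in_setD yQ /=.
case yX: (y \in X) => //=.
have yP : y \in P by rewrite /P -(Side_edge _ ecy cX) ?yX.
by rewrite in_setI yP !andbT negbK.
Qed.

Lemma corner_boundary_card :
  #|boundary (P :\: (W :|: Q))| <= #|X :\: Q| + #|W :&: P|.
Proof.
apply: leq_trans (subset_leq_card corner_boundary) _.
by rewrite cardsU leq_subr.
Qed.

End Corner.

Lemma covered_side_card (P Q X W : {set T}) (v : T) :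
  [disjoint W & Q] -> Q \subset P :|: X -> v \in P :\: (W :|: Q) ->
  #|P| < #|Q| -> #|W :&: P| < #|X :&: Q|.
Proof.
move=> dWQ QPX /setDP[vP]; rewrite in_setU negb_or => /andP[vW vQ] ltPQ.
have coverQ : Q \subset (P :&: Q) :|: (X :&: Q).
  by apply/subsetP => y yQ; rewrite in_setU !in_setI yQ !andbT -in_setU (subsetP QPX).
have inPQ : v |: (W :&: P) \subset P :\: Q.
  apply/subsetP => y; rewrite in_setU1 => /orP[/eqP-> | /setIP[yW yP]].
    by rewrite in_setD vP vQ.
  by rewrite in_setD yP (disjointFr dWQ yW).
have vWP : v \notin W :&: P by rewrite in_setI (negbTE vW).
move: (subset_leq_card inPQ) (subset_leq_card coverQ) (cardsID Q P).
rewrite cardsU1 vWP cardsU; lia.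
Qed.

Variable k : nat.
Hypothesis k_min : forall U, is_cut e U -> k <= #|U|.

Lemma corner_kcut (X W : {set T}) (u v : T) :
  kcut e k X -> kcut e k W -> v \notin X -> v \notin W ->
  v \notin Side e W u -> #|Side e X v| < #|Side e W u| ->
  kcut e k (boundary (Side e X v :\: (W :|: Side e W u))).
Proof.
move=> [cutX cardX] [_ cardW] vX vW vQ ltPQ.
set P := Side e X v; set Q := Side e W u.
set A := P :\: (W :|: Q); set B := Q :\: (X :|: P).
have vP : v \in P by apply: Side_self.
have vA : v \in A by rewrite in_setD in_setU negb_or vW vQ vP.
have [z zX zP] := cut_outside_Side cutX vX.
have cutA : is_cut e (boundary A).
  apply: (boundary_cut vA (z := z)); first by rewrite in_setD (negbTE zP) andbF.
  apply: contraNN zX => /(subsetP (corner_boundary X W v u)).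
  by rewrite in_setU in_setD in_setI (negbTE zP) andbF orbF => /andP[].
have cardA : #|boundary A| <= #|X :\: Q| + #|W :&: P| :=
  corner_boundary_card X W v u.
have geA := k_min cutA.
have splitX := cardsID Q X.
suff leA : #|boundary A| <= k by split => //; lia.
have [B0 | [b bB]] := set_0Vmem B.
  have dWQ : [disjoint W & Q].
    by rewrite disjoint_sym disjoint_subset; apply/subsetP => y /Side_notin.
  have QPX : Q \subset P :|: X.
    apply/subsetP => y yQ; apply: contraT => yPX.
    have : y \in B by rewrite in_setD yQ andbT setUC.
    by rewrite B0 inE.
  have := covered_side_card dWQ QPX vA ltPQ; lia.
have cutB : is_cut e (boundary B).
  apply: (boundary_cut bB (z := v)); first by rewrite in_setD in_setU vP orbT.
  apply: contraNN vX => /(subsetP (corner_boundary W X u v)).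
  by rewrite in_setU in_setD in_setI vP /= => /andP[].
have cardB : #|boundary B| <= #|W :\: P| + #|X :&: Q| :=
  corner_boundary_card W X u v.
have := k_min cutB; have := cardsID P W; lia.
Qed.

End Sides.

Theorem lemma10 (T : finType) (e : rel T) (kappa : nat)
  (u v : T) (Yu Yv W : {set T}) :
  simple_graph e -> connected_graph e -> non_complete e ->
  is_connectivity e kappa ->
  4 * kappa < #|T| ->
  let t := uphalf (#|T| - kappa) in
  is_Small e kappa t u Yu ->
  is_Small e kappa t v Yv ->
  u \in Side e Yv v ->
  kcut e kappa W -> u \notin W ->
  kappa <= #|Side e Yv v| -> #|Side e Yv v| < #|Side e W u| ->
  #|Side e W u| <= t ->
  v \in W :|: Side e W u.
Proof.
move=> [sym_e _] _ _ [_ k_min] _ t _ [cutX vX Pt Pmin] uP cutW uW _ ltPQ _.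
rewrite inE; apply: contraT; rewrite negb_or => /andP[vW vQ].
set A := Side e Yv v :\: (W :|: Side e W u).
have vA : v \in A by rewrite in_setD in_setU negb_or vW vQ Side_self.
have cutA := corner_kcut sym_e k_min cutX cutW vX vW vQ ltPQ.
have sideA := Side_boundary_sub sym_e vA.
have AP : A \subset Side e Yv v by apply: subsetDl.
have smallA : #|Side e (boundary e A) v| <= t.
  exact: leq_trans (subset_leq_card (subset_trans sideA AP)) Pt.
have vN : v \notin boundary e A by rewrite inE vA.
have /subsetP/(_ u uP)/(subsetP sideA) := Pmin _ cutA vN smallA.
by rewrite in_setD in_setU Side_self ?orbT.
Qed.
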